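(* Let $q\ge2$ be a prime power, $d\ge6$ and $j=1$. Then $|Q_1(i)|>|Q_1(i+1)|$ for all $1\le i\le d-1$. Moreover, for every $1\le i\le d$, $Q_1(i)$ has the same sign as $T_{h_{\max}}(i,1)$, where $h_{\max}=\min\{1,d-i\}$.
   Context: Let $b=-q$. For integers $m\ge0$ and $l$, ${m\brack l}_b=\prod_{t=1}^{l}\frac{b^{m-t+1}-1}{b^t-1}$ for $l\ge0$ and $0$ for $l<0$. For $0\le i,j\le d$, $$Q_j(i)=\sum_{h=0}^{\min\{j,d-i\}}(-1)^j(-q)^{\binom{j-h}{2}+hd}{d-h\brack d-j}_b{d-i\brack h}_b,$$ the eigenvalues of the Hermitian forms graph $Q_q(d,j)$ (vertices: $d\times d$ Hermitian matrices over $\mathbb F_{q^2}$, adjacent iff their difference has rank $j$). $T_h(i,j)$ denotes the $h$-th summand (including the factor $(-1)^j$), for $0\le h\le\min\{j,d-i\}$. *)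

From mathcomp Require Import all_boot all_order all_algebra.
Set Implicit Arguments. Unset Strict Implicit. Unset Printing Implicit Defensive.
Import Order.TTheory GRing.Theory Num.Theory.
Local Open Scope ring_scope.

Definition gbin (b : rat) (m l : nat) : rat :=
  \prod_(1 <= t < l.+1) ((b ^+ (m - t + 1)%N - 1) / (b ^+ t - 1)).

Definition prime_power (q : nat) : Prop :=
  exists p k : nat, [/\ prime p, (0 < k)%N & q = (p ^ k)%N].

(* h-th summand T_h(i,j) of Q_j(i) for the Hermitian forms graph, b = -q *)
Definition Tterm (q d : nat) (h i j : nat) : rat :=
  let b : rat := - (q%:R) in
  (-1) ^+ j * b ^+ ('C(j - h, 2) + h * d)%N
    * gbin b (d - h) (d - j) * gbin b (d - i) h.

Definition Qeig (q d : nat) (j i : nat) : rat :=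
  \sum_(0 <= h < (minn j (d - i)).+1) Tterm q d h i j.

From mathcomp Require Import all_boot all_order all_algebra.
From mathcomp Require Import zify ring lra.
Import Order.TTheory GRing.Theory Num.Theory.
Local Open Scope ring_scope.

(* Write b = -q and f k = b^k - 1.  For j = 1 the sum defining Q_1(i) has at
   most two terms, and the Gaussian binomials occurring in them are of the
   shapes [l, l], [l+1, l], [m, 1] and [m, 0], which reduce to 1, f(l+1)/f 1,
   f m / f 1 and 1.  Summing, Q_1(i) = - f(2d-i) / f 1 for 1 <= i <= d, and
   T_1(i,1) = - b^d f(d-i) / f 1 for i < d.  Both claims then become facts
   about the numbers f k with |b| >= 2:
   - |f k| is strictly increasing for k >= 2, giving |Q_1(i+1)| < |Q_1(i)|;
   - f k has the sign of b^k, so sg Q_1(i) = - sg(b^(2d-i)) sg(f 1)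
     = sg T_1(i,1), while for i = d the sum is the single term T_0(d,1). *)

Section PowersOfLargeElements.
Context {R : realFieldType}.

Lemma sgr_subr1 (x : R) : 1 < `|x| -> Num.sg (x - 1) = Num.sg x.
Proof.
rewrite ltr_normr => /orP [x_gt1 | x_lt_m1].
  by rewrite !gtr0_sg //; lra.
by rewrite !ltr0_sg //; lra.
Qed.

Lemma normrX_gt1 (x : R) t : 1 < `|x| -> (1 <= t)%N -> 1 < `|x ^+ t|.
Proof. by move=> x_gt1 t_gt0; rewrite normrX exprn_egt1 // -lt0n. Qed.

(* For |x| >= 2 the numbers |x^k - 1| increase strictly from k = 2 on:
   |x^k - 1| <= |x|^k + 1 < 2|x|^k - 1 <= |x^(k+1) - 1|. *)
Lemma normr_subr1_ltX (x : R) k :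
  2 <= `|x| -> (2 <= k)%N -> `|x ^+ k - 1| < `|x ^+ k.+1 - 1|.
Proof.
move=> x_ge2 k_ge2.
have upper : `|x ^+ k - 1| <= `|x| ^+ k + 1.
  by apply: le_trans (ler_normB _ _) _; rewrite normrX normr1.
have lower : `|x| ^+ k.+1 - 1 <= `|x ^+ k.+1 - 1|.
  by apply: le_trans _ (lerB_dist _ _); rewrite normrX normr1.
have sq_le : `|x| ^+ 2 <= `|x| ^+ k by rewrite ler_eXn2l //; lra.
rewrite exprS in lower; rewrite expr2 in sq_le; nra.
Qed.

End PowersOfLargeElements.

Section GaussianBinomialsAtSmallCodegree.
Variable b : rat.
(* The q-analogue is well defined when no positive power of b equals 1. *)
Hypothesis b_not_root_of_unity : forall t, (1 <= t)%N -> b ^+ t != 1.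
Local Notation f k := (b ^+ k - 1).

Lemma f_neq0 t : (1 <= t)%N -> f t != 0.
Proof. by move=> t_gt0; rewrite subr_eq0 b_not_root_of_unity. Qed.

Lemma prod_f_neq0 l : \prod_(1 <= t < l.+1) f t != 0.
Proof.
rewrite prodf_seq_neq0; apply/allP => t; rewrite mem_index_iota.
by case/andP => t_gt0 _; exact: f_neq0.
Qed.

Lemma gbin0 m : gbin b m 0 = 1.
Proof. by rewrite /gbin big_geq. Qed.

Lemma gbin1 m : (1 <= m)%N -> gbin b m 1 = f m / f 1.
Proof. by move=> m_gt0; rewrite /gbin big_nat1 subnK. Qed.

Lemma gbin_ratio m l :
  gbin b m l = (\prod_(1 <= t < l.+1) f (m - t + 1)) / \prod_(1 <= t < l.+1) f t.
Proof. by rewrite /gbin big_split /= -prodfV. Qed.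

Lemma gbin_numerator_rev l k :
  \prod_(1 <= t < l.+1) f (l + k - t + 1) = \prod_(1 <= t < l.+1) f (t + k).
Proof.
rewrite big_nat_rev /=; apply: eq_big_nat => t /andP [t_gt0 t_le].
by congr (b ^+ _ - 1); lia.
Qed.

Lemma gbin_diag l : gbin b l l = 1.
Proof.
rewrite gbin_ratio.
have := gbin_numerator_rev l 0; rewrite addn0 => ->.
under eq_bigr do rewrite addn0.
by rewrite divff // prod_f_neq0.
Qed.

Lemma gbin_subdiag l : gbin b l.+1 l = f l.+1 / f 1.
Proof.
rewrite gbin_ratio.
have := gbin_numerator_rev l 1; rewrite addn1 => ->.
under eq_bigr do rewrite addn1.
(* both ends of prod_{t=1}^{l+1} f t: f 1 * prod f(t+1) = (prod f t) * f(l+1) *)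
have ends : f 1 * \prod_(1 <= t < l.+1) f t.+1
             = (\prod_(1 <= t < l.+1) f t) * f l.+1.
  by rewrite -(big_nat_recl _ _ (fun t => f t)) // -big_nat_recr.
apply/eqP; rewrite eqr_div ?prod_f_neq0 ?f_neq0 //.
by rewrite mulrC ends mulrC.
Qed.

End GaussianBinomialsAtSmallCodegree.

Lemma prime_power_ge2 (q : nat) : prime_power q -> 2 <= (q%:R : rat).
Proof.
move=> [p [k [p_prime k_gt0 ->]]]; rewrite (ler_nat _ 2).
apply: leq_trans (prime_gt1 p_prime) _.
by rewrite -{1}(expn1 p) leq_pexp2l // prime_gt0.
Qed.

Section FirstEigenvalue.
Variables q d : nat.
Hypothesis q_ge2 : 2 <= (q%:R : rat).
Hypothesis d_gt0 : (0 < d)%N.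
Local Notation b := (- (q%:R : rat)).
Local Notation f k := (b ^+ k - 1).

Lemma normb_ge2 : 2 <= `|b|.
Proof. by rewrite normrN ger0_norm //; lra. Qed.

Lemma normb_gt1 : 1 < `|b|.
Proof. by have := normb_ge2; lra. Qed.

Lemma b_not_root_of_unity t : (1 <= t)%N -> b ^+ t != 1.
Proof.
move=> t_gt0; apply/eqP => bt1.
by have := normrX_gt1 _ _ normb_gt1 t_gt0; rewrite bt1 normr1 ltxx.
Qed.

Let gbin_diag_b := @gbin_diag _ b_not_root_of_unity.
Let gbin_subdiag_b := @gbin_subdiag _ b_not_root_of_unity.
Let f1_neq0 : f 1 != 0 := @f_neq0 _ b_not_root_of_unity 1 (leqnn 1).

(* T_0(i,1) = -[d, d-1] [d-i, 0] = - f d / f 1, independently of i. *)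
Lemma Tterm0_closed i : Tterm q d 0 i 1 = - f d / f 1.
Proof.
rewrite /Tterm /= expr0 gbin0 mulr1 mulN1r.
by case: d d_gt0 => // n _; rewrite subn1 gbin_subdiag_b mulNr.
Qed.

(* T_1(i,1) = -b^d [d-1, d-1] [d-i, 1] = - b^d f(d-i) / f 1 for i < d. *)
Lemma Tterm1_closed i : (i < d)%N -> Tterm q d 1 i 1 = - (b ^+ d * f (d - i)) / f 1.
Proof.
move=> i_lt_d; rewrite /Tterm /= add0n gbin_diag_b gbin1 ?subn_gt0 //.
by rewrite mul1n; ring.
Qed.

Lemma Qeig1_closed i : (i <= d)%N -> Qeig q d 1 i = - f (2 * d - i) / f 1.
Proof.
move=> i_le_d; rewrite /Qeig.
have [i_lt_d | i_ge_d] := ltnP i d.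
- have -> : minn 1 (d - i) = 1%N by lia.
  rewrite big_nat_recr //= big_nat1 Tterm0_closed Tterm1_closed //.
  have -> : (2 * d - i = d + (d - i))%N by lia.
  by rewrite exprD; field.
- have -> : i = d by apply/eqP; rewrite eqn_leq i_le_d.
  by rewrite subnn big_nat1 Tterm0_closed; congr (- (b ^+ _ - 1) / _); lia.
Qed.

End FirstEigenvalue.

Theorem lemma5p1 (q d : nat) :
  prime_power q -> (6 <= d)%N ->
  (forall i : nat, (1 <= i <= d - 1)%N ->
     `|Qeig q d 1 (i + 1)| < `|Qeig q d 1 i|) /\
  (forall i : nat, (1 <= i <= d)%N ->
     Num.sg (Qeig q d 1 i) = Num.sg (Tterm q d (minn 1 (d - i)) i 1)).
Proof.
move=> q_pp d_ge6; have q_ge2 := prime_power_ge2 q q_pp.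
have d_gt0 : (0 < d)%N by lia.
have f1_neq0 := @f_neq0 _ (b_not_root_of_unity q q_ge2) 1 (leqnn 1).
split=> i /andP [i_gt0 i_le].
- (* |Q_1(i)| = |f(2d-i)| / |f 1| and 2d-i-1 >= 2 *)
  rewrite !Qeig1_closed //; try lia.
  rewrite !normrM !normrN !normfV ltr_pM2r ?invr_gt0 ?normr_gt0 //.
  have -> : (2 * d - i = (2 * d - (i + 1)).+1)%N by lia.
  by apply: normr_subr1_ltX; [exact: normb_ge2 | lia].
- have [i_lt_d | i_ge_d] := ltnP i d; last first.
    (* for i = d the sum has the single term T_0(d,1) *)
    have -> : i = d by lia.
    by rewrite /Qeig subnn big_nat1.
  (* sg f k = sg b^k turns both signs into - sg b^(2d-i) sg (f 1) *)
  have sg_f k : (1 <= k)%N -> Num.sg ((- q%:R : rat) ^+ k - 1) = Num.sg ((- q%:R) ^+ k).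
    by move=> k_gt0; apply/sgr_subr1/normrX_gt1/k_gt0/normb_gt1.
  have -> : minn 1 (d - i) = 1%N by lia.
  rewrite Qeig1_closed ?Tterm1_closed // !mulNr !sgrN !sgrM !sg_f ?subn_gt0 //; last lia.
  have -> : (2 * d - i = d + (d - i))%N by lia.
  by rewrite exprD sgrM.
Qed.
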